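(* Let $n\ge 1$ and $k\ge 2$ be integers and let $T=T^1\times\cdots\times T^n$ be a finite product space with $|T^j|=k$ for every $j$, so $|T|=k^n$. Let $D$ be the uniform distribution on $T$; in particular $D$ is a product distribution $D=D^1\times\cdots\times D^n$, each $D^j$ being uniform on $T^j$. Fix a constant $c$ with $0<c<0.017$. There is an absolute constant $C>0$ (independent of $n,k,m,\varepsilon$) such that for every $\varepsilon\in(0,1/2]$ and every positive integer $m< c\,k^n/\varepsilon^2$, if $S=\{s_1,\dots,s_m\}$ consists of $m$ i.i.d. samples from $D$, then \[\Pr_{S\sim D^m}\big[d_{\mathrm{TV}}(\mathrm{emp}(S),D)>\varepsilon\big]\ \ge\ 1-\frac{C}{k^n}.\]
   Context: For distributions $E,D$ on a finite set $T$, the total variation distance is $d_{\mathrm{TV}}(E,D)=\frac12\sum_{x\in T}|E(x)-D(x)|$, where $E(x)$ is the probability that $E$ assigns to $x$. For a sample multiset $S=\{s_1,\dots,s_m\}\subseteq T$, the empirical distribution is $\mathrm{emp}(S)=\frac1m\sum_{i=1}^m\delta_{s_i}$, where $\delta_s$ is the point mass at $s$; i.e. $\mathrm{emp}(S)(x)=\frac1m\#\{i: s_i=x\}$. *)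

From HB Require Import structures.
From mathcomp Require Import all_boot all_order all_algebra.
From mathcomp Require Import reals.
Set Implicit Arguments. Unset Strict Implicit. Unset Printing Implicit Defensive.
Import Order.TTheory GRing.Theory Num.Theory.
Local Open Scope ring_scope.

Section Defs.
Variable R : realType.

(* The product space T = T^1 x ... x T^n with |T^j| = k, represented as
   functions 'I_n -> 'I_k (coordinate j takes values in T^j = 'I_k). *)
Definition prodspace (n k : nat) : finType := {ffun 'I_n -> 'I_k}.

Definition dTV (T : finType) (E D : T -> R) : R :=
  2^-1 * \sum_(x : T) `|E x - D x|.

Definition emp (T : finType) (m : nat) (S : {ffun 'I_m -> T}) : T -> R :=
  fun x => #|[set i | S i == x]|%:R / m%:R.

Definition unif_ord (k : nat) : 'I_k -> R := fun _ => k%:R^-1.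

Definition unifD (n k : nat) : prodspace n k -> R :=
  fun t => \prod_(j < n) unif_ord (t j).

Definition iidPr (T : finType) (D : T -> R) (m : nat)
    (A : {ffun 'I_m -> T} -> bool) : R :=
  \sum_(S : {ffun 'I_m -> T} | A S) \prod_(i < m) D (S i).
End Defs.

From HB Require Import structures.
From mathcomp Require Import all_boot all_order all_algebra.
From mathcomp Require Import reals.
From mathcomp Require Import ring lra.
Set Implicit Arguments. Unset Strict Implicit. Unset Printing Implicit Defensive.
Import Order.TTheory GRing.Theory Num.Theory.
Local Open Scope ring_scope.

(* Write N = |T| and let Y_x be the count of x in the sample minus its mean m/N, so that
   dTV(emp S, D) = (sum_x |Y_x|) / 2m.  If 2m < N, more than half of the points are
   never sampled and the distance exceeds 1/2.  Otherwise E[Y_x^2] = s = (m/N)(1 - 1/N)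
   and E[Y_x^4] <= s + 3 s^2; since |y| >= y^2/a - 4 y^4/(27 a^3) for every a > 0, this
   forces E|Y_x| >= s / sqrt(1 + 3 s), hence E[sum_x |Y_x|] is of order sqrt(m N), well
   above the value 2 m eps < 2 sqrt(c m N) that closeness would need.  Changing one sample
   moves sum_x |Y_x| by at most 2, so its variance is at most 4 m, and Chebyshev's
   inequality bounds the failure probability by O(m / (m N)) = O(1/N). *)

Section IidExpectation.
Variables (R : realType) (T : finType) (D : T -> R).
Hypotheses (D_ge0 : forall t, 0 <= D t) (D_sum1 : \sum_t D t = 1).

Definition iidE m (g : {ffun 'I_m -> T} -> R) : R :=
  \sum_(S : {ffun 'I_m -> T}) (\prod_(i < m) D (S i)) * g S.

Definition iidV m (g : {ffun 'I_m -> T} -> R) : R :=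
  iidE (fun S => g S ^+ 2) - iidE g ^+ 2.

Definition fcons m (t : T) (S : {ffun 'I_m -> T}) : {ffun 'I_m.+1 -> T} :=
  [ffun i => if unlift ord0 i is Some j then S j else t].

Lemma fcons_ord0 m t (S : {ffun 'I_m -> T}) : fcons t S ord0 = t.
Proof. by rewrite ffunE unlift_none. Qed.

Lemma fcons_lift m t (S : {ffun 'I_m -> T}) j : fcons t S (lift ord0 j) = S j.
Proof. by rewrite ffunE liftK. Qed.

Lemma iidE_cons m (g : {ffun 'I_m.+1 -> T} -> R) :
  iidE g = \sum_t D t * iidE (fun S : {ffun 'I_m -> T} => g (fcons t S)).
Proof.
have fcons_bij : bijective (fun p : T * {ffun 'I_m -> T} => fcons p.1 p.2).
  exists (fun S : {ffun 'I_m.+1 -> T} => (S ord0, [ffun j => S (lift ord0 j)])).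
    by case=> t S /=; rewrite fcons_ord0; congr pair; apply/ffunP => j; rewrite ffunE fcons_lift.
  move=> S /=; apply/ffunP => i; rewrite ffunE.
  by case: unliftP => [j ->|->]; rewrite ?ffunE.
rewrite /iidE (reindex _ (onW_bij _ fcons_bij)) /=.
rewrite -(pair_bigA _ (fun t S => (\prod_(i < m.+1) D (fcons t S i)) * g (fcons t S))) /=.
apply: eq_bigr => t _; rewrite mulr_sumr; apply: eq_bigr => S _.
rewrite big_ord_recl fcons_ord0 mulrA.
by congr (_ * _ * _); apply: eq_bigr => j _; rewrite fcons_lift.
Qed.

Lemma eq_iidE m (f g : {ffun 'I_m -> T} -> R) : f =1 g -> iidE f = iidE g.
Proof. by move=> fg; apply: eq_bigr => S _; rewrite fg. Qed.

Lemma iidE_cst m a : iidE (fun _ : {ffun 'I_m -> T} => a) = a.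
Proof.
rewrite /iidE -mulr_suml mulrC -[RHS]mulr1; congr (_ * _).
by rewrite -(bigA_distr_bigA (fun (_ : 'I_m) t => D t)) /= D_sum1 prodr_const expr1n.
Qed.

Lemma iidED m (f g : {ffun 'I_m -> T} -> R) :
  iidE (fun S => f S + g S) = iidE f + iidE g.
Proof. by rewrite /iidE -big_split; apply: eq_bigr => S _; rewrite mulrDr. Qed.

Lemma iidEZ m a (f : {ffun 'I_m -> T} -> R) :
  iidE (fun S => a * f S) = a * iidE f.
Proof. by rewrite /iidE mulr_sumr; apply: eq_bigr => S _; rewrite mulrCA. Qed.

Lemma iidEB m (f g : {ffun 'I_m -> T} -> R) :
  iidE (fun S => f S - g S) = iidE f - iidE g.
Proof. by rewrite /iidE -sumrB; apply: eq_bigr => S _; rewrite mulrBr. Qed.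

Lemma iidE_sum m (I : finType) (g : I -> {ffun 'I_m -> T} -> R) :
  iidE (fun S => \sum_x g x S) = \sum_x iidE (g x).
Proof. by rewrite /iidE -exchange_big; apply: eq_bigr => S _; rewrite mulr_sumr. Qed.

Lemma iidE_nil (g : {ffun 'I_0 -> T} -> R) S : iidE g = g S.
Proof.
by rewrite -[RHS](iidE_cst 0); apply: eq_iidE => S'; congr g; apply/ffunP => -[].
Qed.

Lemma ler_iidE m (f g : {ffun 'I_m -> T} -> R) :
  (forall S, f S <= g S) -> iidE f <= iidE g.
Proof.
by move=> fg; apply: ler_sum => S _; rewrite ler_wpM2l ?prodr_ge0.
Qed.

Lemma iidE_norm m (g : {ffun 'I_m -> T} -> R) : `|iidE g| <= iidE (fun S => `|g S|).
Proof.
apply: le_trans (ler_norm_sum _ _ _) _.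
by apply: ler_sum => S _; rewrite normrM ger0_norm ?prodr_ge0.
Qed.

Lemma iidPrE m (P : {ffun 'I_m -> T} -> bool) : iidPr D P = iidE (fun S => (P S)%:R).
Proof.
rewrite /iidPr /iidE big_mkcond; apply: eq_bigr => S _.
by case: (P S); rewrite ?mulr1 ?mulr0.
Qed.

Lemma iidPr_ge0 m (P : {ffun 'I_m -> T} -> bool) : 0 <= iidPr D P.
Proof. by rewrite /iidPr sumr_ge0 // => S _; rewrite prodr_ge0. Qed.

Lemma iidPrC m (P : {ffun 'I_m -> T} -> bool) : iidPr D P = 1 - iidPr D (fun S => ~~ P S).
Proof.
rewrite !iidPrE; apply/eqP; rewrite eq_sym subr_eq -iidED -[X in X == _](iidE_cst m).
by apply/eqP/eq_iidE => S; case: (P S); rewrite /= ?addr0 ?add0r.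
Qed.

Lemma iidVE m (g : {ffun 'I_m -> T} -> R) : iidV g = iidE (fun S => (g S - iidE g) ^+ 2).
Proof.
have -> : iidE (fun S => (g S - iidE g) ^+ 2) =
          iidE (fun S => g S ^+ 2 + (- (2 * iidE g) * g S + iidE g ^+ 2)).
  by apply: eq_iidE => S; ring.
by rewrite !iidED iidEZ iidE_cst /iidV; ring.
Qed.

Lemma var_le_sqr_diam (G : T -> R) c :
  (forall t t', `|G t - G t'| <= c) ->
  \sum_t D t * G t ^+ 2 - (\sum_t D t * G t) ^+ 2 <= c ^+ 2.
Proof.
move=> G_diam; set Gm := \sum_t D t * G t.
have G_near_mean t : `|G t - Gm| <= c.
  have -> : G t - Gm = \sum_t' D t' * (G t - G t').
    by under eq_bigr do rewrite mulrBr; rewrite sumrB -mulr_suml D_sum1 mul1r.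
  apply: le_trans (ler_norm_sum _ _ _) _.
  rewrite -[c]mul1r -D_sum1 mulr_suml; apply: ler_sum => t' _.
  by rewrite normrM ger0_norm // ler_wpM2l.
have <- : \sum_t D t * (G t - Gm) ^+ 2 = \sum_t D t * G t ^+ 2 - Gm ^+ 2.
  rewrite (eq_bigr (fun t => D t * G t ^+ 2 - 2 * Gm * (D t * G t) + Gm ^+ 2 * D t)).
    by rewrite big_split sumrB /= -!mulr_sumr -/Gm D_sum1; ring.
  by move=> t _; ring.
rewrite -[c ^+ 2]mul1r -D_sum1 mulr_suml; apply: ler_sum => t _.
rewrite ler_wpM2l //; have /andP[lo hi] : - c <= G t - Gm <= c by rewrite -ler_norml.
nra.
Qed.

Lemma iidV_cons m (g : {ffun 'I_m.+1 -> T} -> R) :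
  let G t := iidE (fun S => g (fcons t S)) in
  iidV g = \sum_t D t * iidV (fun S => g (fcons t S)) +
           (\sum_t D t * G t ^+ 2 - (\sum_t D t * G t) ^+ 2).
Proof.
move=> G; rewrite /iidV !iidE_cons -/G.
by rewrite addrA -big_split /=; congr (_ - _); apply: eq_bigr => t _; rewrite /G; ring.
Qed.

Definition bounded_diff m c (g : {ffun 'I_m -> T} -> R) :=
  forall (S S' : {ffun 'I_m -> T}) (i : 'I_m),
    (forall j, j != i -> S j = S' j) -> `|g S - g S'| <= c.

Lemma iidV_le_bounded_diff m c (g : {ffun 'I_m -> T} -> R) :
  bounded_diff c g -> iidV g <= m%:R * c ^+ 2.
Proof.
elim: m g => [|m IHm] g g_bd.
  pose S0 : {ffun 'I_0 -> T} := [ffun i : 'I_0 => ltac:(by case: i)].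
  by rewrite /iidV !(iidE_nil _ S0) subrr mul0r.
have tail_bd t : bounded_diff c (fun S : {ffun 'I_m -> T} => g (fcons t S)).
  move=> S S' i SS'; apply: (g_bd _ _ (lift ord0 i)) => j.
  case: (unliftP ord0 j) => [j' ->|->] ji; last by rewrite !fcons_ord0.
  by rewrite !fcons_lift SS' //; apply: contraNneq ji => ->.
have head_diam t t' : `|iidE (fun S => g (fcons t S)) - iidE (fun S => g (fcons t' S))| <= c.
  rewrite -iidEB; apply: le_trans (iidE_norm _) _.
  rewrite -[c](iidE_cst m); apply: ler_iidE => S; apply: (g_bd _ _ ord0) => j.
  by case: (unliftP ord0 j) => [j' ->|->] j0; rewrite ?fcons_lift ?eqxx in j0 *.
rewrite iidV_cons -natr1 mulrDl mul1r lerD ?var_le_sqr_diam //.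
set bound := _ * _; rewrite -[bound]mul1r -D_sum1 mulr_suml; apply: ler_sum => t _.
by rewrite ler_wpM2l //; apply: IHm.
Qed.

Lemma iidPr_le_iidV m (g : {ffun 'I_m -> T} -> R) b :
  b < iidE g -> iidPr D (fun S => g S <= b) <= iidV g / (iidE g - b) ^+ 2.
Proof.
set A := iidE g => bA; have dist_gt0 : 0 < (A - b) ^+ 2 by rewrite exprn_gt0 // subr_gt0.
rewrite iidPrE iidVE -/A mulrC -iidEZ; apply: ler_iidE => S.
have [gb|_] /= := boolP (g S <= b); last by rewrite mulr_ge0 ?invr_ge0 ?sqr_ge0 ?ltW.
rewrite ler_pdivlMl // mulr1 -[(g S - A) ^+ 2]sqrrN opprB.
by rewrite lerXn2r ?nnegrE; lra.
Qed.

Lemma norm_ge_quartic (a y : R) : 0 < a -> y ^+ 2 / a - 4 / 27 * y ^+ 4 / a ^+ 3 <= `|y|.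
Proof.
move=> a_gt0; have y2 : y ^+ 2 = `|y| ^+ 2 by rewrite real_normK ?num_real.
have -> : y ^+ 4 = (y ^+ 2) ^+ 2 by ring.
rewrite y2 -subr_ge0; set t := `|y|; have t_ge0 : 0 <= t := normr_ge0 y.
have -> : t - (t ^+ 2 / a - 4 / 27 * (t ^+ 2) ^+ 2 / a ^+ 3) =
          4 / 27 * t * (t - 3 / 2 * a) ^+ 2 * (t + 3 * a) / a ^+ 3.
  by field; rewrite gt_eqF.
apply: divr_ge0; last by rewrite exprn_ge0 // ltW.
apply: mulr_ge0; last by rewrite addr_ge0 // mulr_ge0 // ltW.
apply: mulr_ge0; last exact: sqr_ge0.
by apply: mulr_ge0 => //; apply: divr_ge0.
Qed.

(* [norm_ge_quartic] with the optimal [a = 2/3 sqrt (1 + 3 s)]. *)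
Lemma iidE_norm_ge m (g : {ffun 'I_m -> T} -> R) s :
  iidE (fun S => g S ^+ 2) = s -> 0 < s ->
  iidE (fun S => g S ^+ 4) <= s + 3 * s ^+ 2 ->
  s / Num.sqrt (1 + 3 * s) <= iidE (fun S => `|g S|).
Proof.
move=> g2 s_gt0 g4; set r := Num.sqrt (1 + 3 * s).
have r_gt0 : 0 < r by rewrite sqrtr_gt0; lra.
have r2 : r ^+ 2 = 1 + 3 * s by rewrite sqr_sqrtr //; lra.
have a_gt0 : 0 < 2 / 3 * r by lra.
apply: le_trans (ler_iidE (fun S => norm_ge_quartic (g S) a_gt0)).
set a := 2 / 3 * r; set k := 4 / 27 / a ^+ 3.
have k_gt0 : 0 < k by apply: divr_gt0; [lra | exact: exprn_gt0].
have -> : iidE (fun S => g S ^+ 2 / a - 4 / 27 * g S ^+ 4 / a ^+ 3) =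
          a^-1 * iidE (fun S => g S ^+ 2) - k * iidE (fun S => g S ^+ 4).
  by rewrite -!iidEZ -iidEB; apply: eq_iidE => S; rewrite /k; field; rewrite gt_eqF.
have <- : a^-1 * s - k * (s + 3 * s ^+ 2) = s / r.
  have -> : s + 3 * s ^+ 2 = s * r ^+ 2 by rewrite r2; ring.
  by rewrite /k /a; field; rewrite gt_eqF.
by rewrite g2 lerD2l lerN2 ler_pM2l.
Qed.
End IidExpectation.

Section CenteredCount.
Variables (R : realType) (T : finType) (D : T -> R).
Hypotheses (D_ge0 : forall t, 0 <= D t) (D_sum1 : \sum_t D t = 1).
Variable x : T.

Definition cind (t : T) : R := (t == x)%:R - D x.

Definition ccount m (S : {ffun 'I_m -> T}) : R := \sum_i cind (S i).

Definition cmoment j : R := \sum_t D t * cind t ^+ j.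

Lemma ccount_fcons m t (S : {ffun 'I_m -> T}) : ccount (fcons t S) = cind t + ccount S.
Proof.
by rewrite /ccount big_ord_recl fcons_ord0; under eq_bigr do rewrite fcons_lift.
Qed.

Lemma iidE_ccount_cons m j :
  iidE D (fun S : {ffun 'I_m.+1 -> T} => ccount S ^+ j) =
  \sum_(i < j.+1) cmoment (j - i) * iidE D (fun S : {ffun 'I_m -> T} => ccount S ^+ i) *+ 'C(j, i).
Proof.
rewrite iidE_cons.
under eq_bigr => t _ do under eq_iidE => S do rewrite ccount_fcons exprDn.
under eq_bigr => t _ do rewrite iidE_sum mulr_sumr.
rewrite exchange_big; apply: eq_bigr => i _.
rewrite /cmoment -mulr_natr !mulr_suml; apply: eq_bigr => t _.
by under eq_iidE do rewrite -mulrnAl; rewrite iidEZ -mulr_natr; ring.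
Qed.

Lemma D_le1 : D x <= 1.
Proof. by rewrite -D_sum1 (bigD1 x) //= lerDl sumr_ge0. Qed.

Lemma sum_D_indicator (t0 : T) : \sum_t D t * (t == t0)%:R = D t0.
Proof.
rewrite (bigD1 t0) //= eqxx mulr1 big1 ?addr0 // => t /negbTE ->.
by rewrite mulr0.
Qed.

Lemma cmoment0 : cmoment 0 = 1.
Proof. by rewrite /cmoment -D_sum1; apply: eq_bigr => t _; rewrite mulr1. Qed.

Lemma cmoment1 : cmoment 1 = 0.
Proof.
rewrite /cmoment; under eq_bigr do rewrite expr1 /cind mulrBr.
by rewrite sumrB sum_D_indicator -mulr_suml D_sum1 mul1r subrr.
Qed.

Lemma cmoment2 : cmoment 2 = D x * (1 - D x).
Proof.
rewrite /cmoment (eq_bigr (fun t => D t * (t == x)%:R * (1 - 2 * D x) + D t * D x ^+ 2)).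
  by rewrite big_split /= -!mulr_suml sum_D_indicator D_sum1; ring.
by move=> t _; rewrite /cind; case: (t == x); rewrite /= ?mulr1 ?mulr0; ring.
Qed.

Lemma cmoment4_le2 : cmoment 4 <= cmoment 2.
Proof.
apply: ler_sum => t _; rewrite ler_wpM2l //.
have Dx_ge0 := D_ge0 x; have Dx_le1 := D_le1.
have cind_sq_le1 : cind t ^+ 2 <= 1 by rewrite /cind; case: (t == x) => /=; nra.
by rewrite (exprM _ 2 2) ler_piMl ?sqr_ge0 // exprn_ge0 ?sqr_ge0.
Qed.

Lemma iidE_ccount_nil j : (0 < j)%N ->
  iidE D (fun S : {ffun 'I_0 -> T} => ccount S ^+ j) = 0.
Proof.
move=> j_gt0; rewrite -(iidE_cst D_sum1 0 0); apply: eq_iidE => S.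
by rewrite /ccount big_ord0 expr0n gtn_eqF.
Qed.

Lemma iidE_ccount1 m : iidE D (fun S : {ffun 'I_m -> T} => ccount S ^+ 1) = 0.
Proof.
elim: m => [|m IHm]; first exact: iidE_ccount_nil.
rewrite iidE_ccount_cons !big_ord_recl big_ord0 !lift0 /= subn0 subnn.
by rewrite cmoment1 IHm; ring.
Qed.

Lemma iidE_ccount2 m :
  iidE D (fun S : {ffun 'I_m -> T} => ccount S ^+ 2) = m%:R * cmoment 2.
Proof.
elim: m => [|m IHm]; first by rewrite iidE_ccount_nil // mul0r.
rewrite iidE_ccount_cons !big_ord_recl big_ord0 !lift0 /= !subSS ?subn0.
by rewrite iidE_ccount1 IHm cmoment1 cmoment0 (iidE_cst D_sum1) bin0 binn -natr1; ring.
Qed.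

Lemma iidE_ccount4 m :
  iidE D (fun S : {ffun 'I_m -> T} => ccount S ^+ 4) =
  m%:R * cmoment 4 + 3 * m%:R * (m%:R - 1) * cmoment 2 ^+ 2.
Proof.
elim: m => [|m IHm]; first by rewrite iidE_ccount_nil //; ring.
rewrite iidE_ccount_cons !big_ord_recl big_ord0 !lift0 /= !subSS ?subn0.
rewrite iidE_ccount1 iidE_ccount2 IHm cmoment1 cmoment0 (iidE_cst D_sum1).
by rewrite bin0 bin1 binn (_ : 'C(4, 2) = 6) // -natr1; ring.
Qed.

Lemma iidE_ccount4_le m :
  iidE D (fun S : {ffun 'I_m -> T} => ccount S ^+ 4) <=
  iidE D (fun S : {ffun 'I_m -> T} => ccount S ^+ 2) +
  3 * iidE D (fun S : {ffun 'I_m -> T} => ccount S ^+ 2) ^+ 2.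
Proof.
rewrite iidE_ccount4 iidE_ccount2.
have m_ge0 : 0 <= m%:R :> R by [].
have := cmoment4_le2; have : 0 <= cmoment 2 by rewrite cmoment2 mulr_ge0 // subr_ge0 D_le1.
nra.
Qed.
End CenteredCount.

Section L1Deviation.
Variables (R : realType) (T : finType) (D : T -> R).

Definition l1dev m (S : {ffun 'I_m -> T}) : R := \sum_x `|ccount D x S|.

Lemma ccountE m x (S : {ffun 'I_m -> T}) :
  ccount D x S = #|[set i | S i == x]|%:R - m%:R * D x.
Proof.
rewrite /ccount /cind sumrB sumr_const card_ord mulr_natl -sum1dep_card natr_sum.
congr (_ - _); rewrite [RHS]big_mkcond; apply: eq_bigr => i _.
by case: (S i == x).
Qed.

Lemma dTV_emp m (S : {ffun 'I_m -> T}) : (0 < m)%N ->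
  dTV (emp R S) D = l1dev S / (2 * m%:R).
Proof.
move=> m_gt0; have m_neq0 : m%:R != 0 :> R by rewrite pnatr_eq0 -lt0n.
rewrite /dTV /l1dev invfM mulrA [_ * 2^-1]mulrC -mulrA mulr_suml; congr (_ * _).
apply: eq_bigr => x _; have -> : emp R S x - D x = ccount D x S / m%:R.
  by rewrite ccountE /emp; field.
by rewrite normrM [`|_^-1|]ger0_norm ?invr_ge0.
Qed.

Lemma l1dev_bounded_diff m : bounded_diff 2 (@l1dev m).
Proof.
move=> S S' i SS'; rewrite /l1dev -sumrB.
apply: le_trans (ler_norm_sum _ _ _) _.
have sum_ind (t : T) : \sum_x (t == x)%:R = 1 :> R.
  by rewrite (bigD1 t) //= eqxx big1 ?addr0 // => x /negbTE; rewrite eq_sym => ->.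
apply: (le_trans (y := \sum_x ((S i == x)%:R + (S' i == x)%:R))); last first.
  by rewrite big_split /= !sum_ind.
apply: ler_sum => x _; apply: le_trans (ler_dist_dist _ _) _.
have -> : ccount D x S - ccount D x S' = (S i == x)%:R - (S' i == x)%:R.
  rewrite /ccount (bigD1 i) //= [X in _ - X](bigD1 i) //=.
  rewrite (eq_bigr (fun j => cind D x (S' j))) => [|j /SS' -> //]; rewrite /cind; ring.
by apply: le_trans (ler_normB _ _) _; rewrite !ger0_norm.
Qed.
End L1Deviation.

Lemma card_fiber_sum (T : finType) m (S : {ffun 'I_m -> T}) :
  (\sum_x #|[set i | S i == x]|)%N = m.
Proof.
rewrite -[RHS]card_ord -sum1_card (partition_big S xpredT) //=.
by apply: eq_bigr => x _; rewrite sum1dep_card.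
Qed.

Lemma norm_natr_sub_ge (R : realDomainType) (c : nat) (p : R) :
  0 <= p -> c%:R + p - 2 * p * c%:R <= `|c%:R - p|.
Proof.
move=> p_ge0; case: c => [|c]; first by rewrite mulr0 subr0 add0r sub0r normrN ger0_norm.
have c1 : 1 <= c.+1%:R :> R by rewrite ler1n.
by apply: le_trans (ler_norm _); nra.
Qed.

Section Uniform.
Variables (R : realType) (T : finType) (D : T -> R).
Hypotheses (T_gt0 : (0 < #|T|)%N) (D_unif : forall t, D t = #|T|%:R^-1).
Let N : R := #|T|%:R.

Lemma N_gt0 : 0 < N. Proof. by rewrite ltr0n. Qed.

Lemma unif_ge0 t : 0 <= D t.
Proof. by rewrite D_unif invr_ge0. Qed.

Lemma unif_sum1 : \sum_t D t = 1.
Proof.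
under eq_bigr do rewrite D_unif.
by rewrite sumr_const -[_ *+ #|xpredT|]mulr_natl mulfV ?gt_eqF ?N_gt0.
Qed.

Lemma l1dev_ge m (S : {ffun 'I_m -> T}) : 2 * m%:R - 2 * m%:R ^+ 2 / N <= l1dev D S.
Proof.
have mu_ge0 : 0 <= m%:R / N by rewrite divr_ge0 // ltW ?N_gt0.
have -> : 2 * m%:R - 2 * m%:R ^+ 2 / N =
          \sum_x (#|[set i | S i == x]|%:R + m%:R / N - 2 * (m%:R / N) * #|[set i | S i == x]|%:R).
  have sum_card : \sum_x #|[set i | S i == x]|%:R = m%:R :> R.
    by rewrite -natr_sum card_fiber_sum.
  have sum_mu : \sum_(x : T) m%:R / N = m%:R.
    by under eq_bigr => x _ do rewrite -(D_unif x); rewrite -mulr_sumr unif_sum1 mulr1.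
  rewrite sumrB big_split /= sum_card sum_mu -mulr_sumr sum_card.
  by field; rewrite gt_eqF ?N_gt0.
by apply: ler_sum => x _; rewrite ccountE D_unif norm_natr_sub_ge.
Qed.

Lemma dTV_emp_gt m (S : {ffun 'I_m -> T}) eps :
  (0 < m)%N -> (2 * m < #|T|)%N -> eps <= 2^-1 -> eps < dTV (emp R S) D.
Proof.
move=> m_gt0 small eps_le; have m_pos : 0 < m%:R :> R by rewrite ltr0n.
have two_m_lt : 2 * m%:R < N by rewrite /N -natrM ltr_nat.
have den_gt0 : 0 < 2 * m%:R :> R by rewrite mulr_gt0.
rewrite dTV_emp // ltr_pdivlMr //; apply: lt_le_trans (l1dev_ge S).
have : 2 * m%:R ^+ 2 / N < m%:R by rewrite ltr_pdivrMr ?N_gt0 //; nra.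
have : eps * (2 * m%:R) <= m%:R by nra.
lra.
Qed.

Let count_var m : R := m%:R * (N^-1 * (1 - N^-1)).

Lemma iidE_l1dev_ge m : (0 < m)%N -> (1 < #|T|)%N ->
  N * (count_var m / Num.sqrt (1 + 3 * count_var m)) <= iidE D (@l1dev R T D m).
Proof.
move=> m_gt0 N_gt1; set s := count_var m; have N_pos := N_gt0.
have s_gt0 : 0 < s.
  rewrite !mulr_gt0 ?ltr0n ?invr_gt0 // subr_gt0 invf_lt1 //.
  by rewrite /N ltr1n.
have ccount2 x : iidE D (fun S : {ffun 'I_m -> T} => ccount D x S ^+ 2) = s.
  by rewrite (iidE_ccount2 unif_sum1) (cmoment2 unif_sum1) D_unif.
have ccount4 x : iidE D (fun S : {ffun 'I_m -> T} => ccount D x S ^+ 4) <= s + 3 * s ^+ 2.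
  by rewrite -(ccount2 x) (iidE_ccount4_le unif_ge0 unif_sum1).
rewrite /l1dev iidE_sum; apply: le_trans (ler_sum _ (fun x _ =>
  iidE_norm_ge unif_ge0 (ccount2 x) s_gt0 (ccount4 x))).
by rewrite sumr_const -[_ *+ #|xpredT|]mulr_natl.
Qed.

Lemma iidE_l1dev_sq_ge m : (10 <= #|T|)%N -> (#|T| <= 2 * m)%N ->
  81 / 500 * (m%:R * N) <= iidE D (@l1dev R T D m) ^+ 2.
Proof.
move=> N_ge10 N_le2m; have N_pos := N_gt0.
have N_ge : 10 <= N by rewrite /N ler_nat.
have N_le : N <= 2 * m%:R by rewrite /N -natrM ler_nat.
have m_gt0 : 0 < m%:R :> R by lra.
have m_pos : (0 < m)%N by rewrite -(ltr0n R).
set u := N^-1; set q := 1 - u; set s := m%:R * (u * q); set r := Num.sqrt (1 + 3 * s).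
set L := N * (s / r).
have L_le : L <= iidE D (@l1dev R T D m).
  exact: iidE_l1dev_ge m_pos (leq_trans (isT : (1 < 10)%N) N_ge10).
have u_gt0 : 0 < u by rewrite invr_gt0.
have uN : u * N = 1 by rewrite mulVf ?gt_eqF.
have q_ge : 9 / 10 <= q by rewrite /q; nra.
have s_gt0 : 0 < s by rewrite /s !mulr_gt0 //; lra.
have r_gt0 : 0 < r by rewrite sqrtr_gt0; lra.
have r2 : r ^+ 2 = 1 + 3 * s by rewrite sqr_sqrtr //; lra.
have L_ge0 : 0 <= L by rewrite mulr_ge0 ?divr_ge0 // ltW.
apply: le_trans (_ : L ^+ 2 <= _); last by rewrite lerXn2r ?nnegrE // (le_trans L_ge0).
have L2 : L ^+ 2 * (1 + 3 * s) = (m%:R * q) ^+ 2.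
  by rewrite -r2 /L /s /u; field; rewrite !gt_eqF.
have var_le : 1 + 3 * s <= 5 * m%:R * u.
  have : u * N <= u * (2 * m%:R) by rewrite ler_pM2l.
  have : 0 <= m%:R * u * u by rewrite !mulr_ge0 // ltW.
  rewrite /s /q; nra.
have : (m%:R * q) ^+ 2 * N <= L ^+ 2 * (5 * m%:R * u) * N.
  by rewrite ler_pM2r // -L2 ler_wpM2l ?sqr_ge0.
have -> : (m%:R * q) ^+ 2 * N = m%:R * (m%:R * q ^+ 2 * N) by ring.
have -> : L ^+ 2 * (5 * m%:R * u) * N = m%:R * (5 * L ^+ 2).
  by rewrite /u; field; rewrite gt_eqF.
rewrite ler_pM2l // => L2_ge.
have : 81 / 100 * (m%:R * N) <= q ^+ 2 * (m%:R * N) by rewrite ler_pM2r ?mulr_gt0 //; nra.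
lra.
Qed.

Lemma iidPr_l1dev_le m b : (10 <= #|T|)%N -> (#|T| <= 2 * m)%N ->
  0 <= b -> b ^+ 2 <= 17 / 250 * (m%:R * N) ->
  iidPr D (fun S : {ffun 'I_m -> T} => l1dev D S <= b) <= 1000 / N.
Proof.
move=> N_ge10 N_le2m b_ge0 b2_le; have N_pos := N_gt0.
have m_gt0 : 0 < m%:R :> R.
  have : 10 <= 2 * m%:R :> R by rewrite -natrM ler_nat (leq_trans N_ge10).
  lra.
set A := iidE D (@l1dev R T D m).
have A2_ge := iidE_l1dev_sq_ge N_ge10 N_le2m; rewrite -/A in A2_ge.
have A_ge0 : 0 <= A.
  by rewrite -(iidE_cst unif_sum1 m 0) (ler_iidE unif_ge0) // => S; rewrite sumr_ge0.
have mN_gt0 : 0 < m%:R * N by rewrite mulr_gt0.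
have bA : 4 * b < 3 * A by nra.
apply: le_trans (iidPr_le_iidV unif_ge0 unif_sum1 (_ : b < A)) _; first lra.
have A_b2 : 81 / 8000 * (m%:R * N) <= (A - b) ^+ 2.
  have : A / 4 <= A - b by lra.
  have : (A / 4) ^+ 2 <= (A - b) ^+ 2 by nra.
  have -> : (A / 4) ^+ 2 = A ^+ 2 / 16 by field.
  lra.
rewrite -/A ler_pdivrMr; last by rewrite exprn_gt0 // subr_gt0; lra.
apply: le_trans (iidV_le_bounded_diff unif_ge0 unif_sum1 (@l1dev_bounded_diff R T D m)) _.
apply: le_trans (_ : 1000 / N * (81 / 8000 * (m%:R * N)) <= _); last first.
  by rewrite ler_pM2l ?divr_gt0.
have -> : 1000 / N * (81 / 8000 * (m%:R * N)) = 81 / 8 * m%:R by field; rewrite gt_eqF.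
lra.
Qed.

Lemma iidPr_dTV_emp_ge m eps c :
  0 < c -> c < 17 / 1000 -> 0 < eps -> eps <= 2^-1 ->
  (0 < m)%N -> m%:R < c * N / eps ^+ 2 ->
  1 - 1000 / N <= iidPr D (fun S : {ffun 'I_m -> T} => eps < dTV (emp R S) D).
Proof.
move=> c_gt0 c_lt eps_gt0 eps_le m_gt0 m_lt; have N_pos := N_gt0.
have [N_le9|N_ge10] := leqP #|T| 9.
  apply: le_trans (iidPr_ge0 unif_ge0 _); rewrite subr_le0 ler_pdivlMr // mul1r.
  by rewrite /N ler_nat (leq_trans N_le9).
have [small|N_le2m] := ltnP (2 * m) #|T|.
  have -> : iidPr D (fun S : {ffun 'I_m -> T} => eps < dTV (emp R S) D) = 1.
    rewrite iidPrE -[RHS](iidE_cst unif_sum1 m); apply: eq_iidE => S.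
    by rewrite dTV_emp_gt.
  by rewrite lerBlDr lerDl divr_ge0 // ltW.
set b := 2 * m%:R * eps.
have -> : iidPr D (fun S : {ffun 'I_m -> T} => eps < dTV (emp R S) D) =
          1 - iidPr D (fun S : {ffun 'I_m -> T} => l1dev D S <= b).
  rewrite (iidPrC unif_sum1); congr (1 - _); rewrite !iidPrE; apply: eq_iidE => S.
  by rewrite -leNgt dTV_emp // ler_pdivrMr ?mulr_gt0 ?ltr0n // mulrC.
rewrite lerD2l lerN2 iidPr_l1dev_le //; first by rewrite /b !mulr_ge0 // ltW.
have : m%:R * eps ^+ 2 < c * N by rewrite -ltr_pdivlMr ?exprn_gt0.
have m_ge0 : 0 <= m%:R :> R by [].
rewrite /b; nra.
Qed.
End Uniform.

Lemma card_prodspace n k : #|prodspace n k| = (k ^ n)%N.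
Proof. by rewrite card_ffun !card_ord. Qed.

Lemma unifD_uniform (R : realType) n k (t : prodspace n k) :
  unifD R t = #|prodspace n k|%:R^-1.
Proof. by rewrite /unifD /unif_ord prodr_const card_ord card_prodspace natrX exprVn. Qed.

Unset Implicit Arguments.

Theorem theorem1 (R : realType) (c : R) :
  0 < c -> c < 17 / 1000 ->
  exists C : R, 0 < C /\
    forall (n k m : nat) (eps : R),
      (1 <= n)%N -> (2 <= k)%N ->
      0 < eps -> eps <= 2^-1 ->
      (0 < m)%N -> m%:R < c * (k ^ n)%:R / eps ^+ 2 ->
      @iidPr R (prodspace n k) (@unifD R n k) m
        (fun S => eps < dTV (emp R S) (@unifD R n k))
      >= 1 - C / (k ^ n)%:R.
Proof.
move=> c_gt0 c_lt; exists 1000; split=> // n k m eps _ k_ge2 eps_gt0 eps_le m_gt0.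
have T_gt0 : (0 < #|prodspace n k|)%N by rewrite card_prodspace expn_gt0 (leq_trans _ k_ge2).
rewrite -card_prodspace => m_lt.
exact: (iidPr_dTV_emp_ge T_gt0 (@unifD_uniform R n k) c_gt0 c_lt eps_gt0 eps_le m_gt0 m_lt).
Qed.
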